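(* Let $g(v;a)=v(1-v)(v-a)$, $k>0$, $a\in(0,\frac12)$, and $A\in(a,\frac{a+1}{3})$. Then $$d^\diamond(A;a)=\frac{g'(A;a)}{k+1},$$ where $g'=\partial_v g$.
   Context: $d^\diamond(A;a)=\inf\{d>0:\ d(k+1)(A-v)-g(A;a)\ge -g(v;a)\ \text{for all }v\in[0,A]\}$. *)

From HB Require Import structures.
From mathcomp Require Import all_boot all_order all_algebra.
From mathcomp Require Import all_classical all_reals all_analysis.
Set Implicit Arguments. Unset Strict Implicit. Unset Printing Implicit Defensive.
Import Order.TTheory GRing.Theory Num.Theory.
Local Open Scope classical_set_scope.
Local Open Scope ring_scope.

Definition g {R : realType} (v a : R) : R := v * (1 - v) * (v - a).

Definition d_diamond {R : realType} (k A a : R) : R :=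
  inf [set d : R | 0 < d /\
        forall v : R, 0 <= v <= A -> - g v a <= d * (k + 1) * (A - v) - g A a].

(* Expanding, g(A) - g(v) = (A - v) (g'(A) - (A - v) (1 + a - v - 2A)). For
   0 <= v <= A <= (1 + a)/3 the last factor is nonnegative, so every chord of g
   ending at A has slope at most g'(A), while the chord slopes tend to g'(A) as
   v -> A. Hence d is admissible exactly when d (k + 1) >= g'(A), and g'(A) > 0
   on the given range of A, so the admissible set is the ray [g'(A)/(k+1), +oo). *)

From HB Require Import structures.
From mathcomp Require Import all_boot all_order all_algebra.
From mathcomp Require Import all_classical all_reals all_analysis.
From mathcomp Require Import ring lra.
Set Implicit Arguments. Unset Strict Implicit. Unset Printing Implicit Defensive.
Import Order.TTheory GRing.Theory Num.Theory.
Local Open Scope ring_scope.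

Section cubic.
Variable R : realType.
Implicit Types a v A c : R.

Definition g' v a : R := - 3 * v ^+ 2 + 2 * (1 + a) * v - a.

Lemma derive1_g a v : derive1 (fun w : R => g w a) v = g' v a.
Proof.
rewrite derive1E /g; apply: derive_val; apply: is_derive_eq.
by rewrite /GRing.scale /= /g'; lra.
Qed.

Lemma g_sub_expansion a A v :
  g A a - g v a = (A - v) * (g' A a - (A - v) * (1 + a - v - 2 * A)).
Proof. by rewrite /g /g'; ring. Qed.

Lemma g_sub_le_tangent a A v : 3 * A <= 1 + a -> v <= A ->
  g A a - g v a <= g' A a * (A - v).
Proof.
move=> A3 vA; rewrite g_sub_expansion mulrC ler_wpM2r ?subr_ge0 //.
by rewrite lerBlDr lerDl; apply: mulr_ge0; lra.
Qed.

Lemma g_sub_gt_slope a A c : 0 < A -> -1 < a -> c < g' A a ->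
  exists2 v, 0 <= v <= A & c * (A - v) < g A a - g v a.
Proof.
move=> A0 a1 cg; set e := Num.min A ((g' A a - c) / (2 * (1 + a))).
have e0 : 0 < e by rewrite lt_min A0 divr_gt0 //; lra.
have eA : e <= A by rewrite ge_min lexx.
have ee : e * (1 + a) <= (g' A a - c) / 2.
  have -> : (g' A a - c) / 2 = (g' A a - c) / (2 * (1 + a)) * (1 + a).
    by field; lra.
  by rewrite ler_wpM2r ?ge_min ?lexx ?orbT //; lra.
exists (A - e); first by apply/andP; split; lra.
rewrite g_sub_expansion opprB addrC subrK [c * e]mulrC ltr_pM2l //.
have : e * (1 + a + (e - A) - 2 * A) <= e * (1 + a) by apply: ler_wpM2l; lra.
lra.
Qed.

Lemma g_chord_bound_iff a A c : 0 < A -> -1 < a -> 3 * A <= 1 + a ->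
  (forall v, 0 <= v <= A -> - g v a <= c * (A - v) - g A a) <-> g' A a <= c.
Proof.
move=> A0 a1 A3; split=> [chord | gc v /andP[_ vA]].
  rewrite leNgt; apply/negP=> /(g_sub_gt_slope A0 a1) [v vA].
  by have := chord v vA; lra.
have := g_sub_le_tangent A3 vA.
have : g' A a * (A - v) <= c * (A - v) by rewrite ler_wpM2r // subr_ge0.
lra.
Qed.

Lemma g'_gt0 a A : 0 <= a -> a < A -> A < 1 -> 2 * A <= 1 + a -> 0 < g' A a.
Proof.
move=> a0 aA A1 A2.
have -> : g' A a = (A - a) * (1 - A) + A * (1 + a - 2 * A) by rewrite /g'; ring.
by rewrite ltr_pwDl ?mulr_ge0 ?mulr_gt0 //; lra.
Qed.

End cubic.

Theorem lemma7p2 (R : realType) (k a A : R) :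
  0 < k -> 0 < a -> a < 1 / 2 -> a < A -> A < (a + 1) / 3 ->
  d_diamond k A a = derive1 (fun v : R => g v a) A / (k + 1).
Proof.
move=> k0 a0 a_half aA A_third.
have A3 : 3 * A < 1 + a by move: A_third; rewrite ltr_pdivlMr //; lra.
have k1 : 0 < k + 1 by lra.
have g'A : 0 < g' A a by apply: g'_gt0; lra.
rewrite derive1_g /d_diamond -[RHS](@inf_itv _ +oo%O true) //.
congr inf; apply/seteqP; split=> d /=.
- move=> [_ /g_chord_bound_iff chord].
  by rewrite in_itv /= andbT ler_pdivrMr // chord //; lra.
- rewrite in_itv /= andbT ler_pdivrMr // => gd; split.
    by rewrite -(pmulr_lgt0 d k1) (lt_le_trans g'A gd).
  by apply/g_chord_bound_iff => //; lra.
Qed.
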